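(* Let $n\ge 1$ and let $d_1^+,\dots,d_n^+$ and $d_1^-,\dots,d_n^-$ be sequences of non-negative integers (in-degrees and out-degrees, respectively), and put $d_j=d_j^++d_j^-$. 1) Let $G$ be the random directed graph on $[n]$ given by the directed random configuration model with in-degrees $d_1^+,\dots,d_n^+$ and out-degrees $d_1^-,\dots,d_n^-$. Then for every $\varepsilon>0$, $$\mathbb{P}\big(|m(G)-\mathbb{E}(m(G))|>\varepsilon\big)\le 2\exp\Big\{-\frac{\varepsilon^2n^2}{8\sum_{k=1}^n d_k^2}\Big\}.$$ 2) Let $G$ be the random directed graph on $[n]$ given by the random configuration model with total degrees $d_1,\dots,d_n$ and independently uniformly oriented edges. Then for every $\varepsilon>0$, $$\mathbb{P}\big(|m(G)-\mathbb{E}(m(G))|>\varepsilon\big)\le 2\exp\Big\{-\frac{\varepsilon^2n^2}{32\sum_{k=1}^n d_k^2}\Big\}.$$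
   Context: Graphs may have multiple edges and loops. A directed matching of a directed graph $G$ is a set $M$ of edges such that every vertex has in-degree at most one and out-degree at most one in the subgraph formed by $M$. The directed matching ratio of a finite directed graph $G$ is $m(G)=|M_{\max}(G)|/|V(G)|$, where $M_{\max}(G)$ is a directed matching of maximum size. Directed configuration model with prescribed in/out-degrees: vertex $k\in[n]$ receives $d_k^-$ tail-type half-edges and $d_k^+$ head-type half-edges (assuming $\sum_k d_k^-=\sum_k d_k^+$); a uniformly random bijection between the set of tail-type half-edges and the set of head-type half-edges is chosen, and each matched pair (tail half-edge at $u$, head half-edge at $v$) gives a directed edge $(u,v)$. Configuration model with prescribed total degrees: vertex $k$ receives $d_k$ half-edges; if the total number of half-edges is odd, one uniformly chosen half-edge is discarded; a uniformly random perfect matching of the half-edges is chosen, each matched pair giving an edge; then each edge is given one of its two orientations uniformly at random, independently of the others. *)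

From HB Require Import structures.
From mathcomp Require Import all_boot all_order all_algebra.
From mathcomp Require Import reals sequences exp.
Set Implicit Arguments. Unset Strict Implicit. Unset Printing Implicit Defensive.
Import Order.TTheory GRing.Theory Num.Theory.
Local Open Scope ring_scope.

(* A directed multigraph on vertex set 'I_n: a finite type E of edge
   labels, a set Es of present edges, and source/target maps.
   Loops and multiple edges are allowed. *)
Definition dmatching (E : finType) (n : nat) (src dst : E -> 'I_n)
    (M : {set E}) : bool :=
  [forall v : 'I_n, (#|[set e in M | src e == v]| <= 1)%N
                  && (#|[set e in M | dst e == v]| <= 1)%N].

Definition max_dmatch (E : finType) (n : nat) (Es : {set E})
    (src dst : E -> 'I_n) : nat :=
  \max_(M : {set E} | (M \subset Es) && dmatching src dst M) #|M|.

Definition match_ratio (R : realType) (E : finType) (n : nat) (Es : {set E})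
    (src dst : E -> 'I_n) : R :=
  (max_dmatch Es src dst)%:R / n%:R.

Definition unif_prob (R : realType) (T : finType) (S : {set T}) (A : pred T) : R :=
  #|[set x in S | A x]|%:R / #|S|%:R.

Definition unif_exp (R : realType) (T : finType) (S : {set T}) (f : T -> R) : R :=
  (\sum_(x in S) f x) / #|S|%:R.

(* tail-type half-edges of vertex k: {k & 'I_(dm k)} (dm = out-degrees),
   head-type half-edges: {k & 'I_(dp k)} (dp = in-degrees).
   A configuration is a bijection tails -> heads (an injective finite
   function; bijective since the two sets have equal size). *)
Definition dcm_space (n : nat) (dp dm : 'I_n -> nat) :
    {set {ffun {k : 'I_n & 'I_(dm k)} -> {k : 'I_n & 'I_(dp k)}}} :=
  [set s : {ffun {k : 'I_n & 'I_(dm k)} -> {k : 'I_n & 'I_(dp k)}}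
       | injectiveb (fun t => s t)].

(* the edge indexed by tail half-edge t goes from (vertex of t) to
   (vertex of the head half-edge matched with t) *)
Definition dcm_ratio (R : realType) (n : nat) (dp dm : 'I_n -> nat)
    (s : {ffun {k : 'I_n & 'I_(dm k)} -> {k : 'I_n & 'I_(dp k)}}) : R :=
  match_ratio R setT (fun t => tag t) (fun t => tag (s t)).

(* An outcome is a pair (p, o):
   p is an involution of the half-edges with exactly (total mod 2) fixed
   points (the fixed point, if any, is the discarded half-edge; the other
   orbits {x, p x} are the edges of the uniform perfect matching);
   o : half-edge -> bool orients the edge {x, p x} from x to p x iff o x,
   with o (p x) = ~~ o x, and o = false on the discarded half-edge.
   The uniform distribution on such pairs is exactly the law of
   (uniform discarded half-edge, uniform perfect matching,
    independent uniform orientations). *)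
Definition cmo_space (n : nat) (d : 'I_n -> nat) :
    {set {ffun {k : 'I_n & 'I_(d k)} -> {k : 'I_n & 'I_(d k)}}
         * {ffun {k : 'I_n & 'I_(d k)} -> bool}} :=
  [set po : {ffun {k : 'I_n & 'I_(d k)} -> {k : 'I_n & 'I_(d k)}}
            * {ffun {k : 'I_n & 'I_(d k)} -> bool} | [&& [forall x, po.1 (po.1 x) == x],
                #|[set x | po.1 x == x]| == odd (\sum_k d k) &
                [forall x, if po.1 x == x then po.2 x == false
                           else po.2 (po.1 x) == ~~ po.2 x]]].

Definition cmo_ratio (R : realType) (n : nat) (d : 'I_n -> nat)
    (po : {ffun {k : 'I_n & 'I_(d k)} -> {k : 'I_n & 'I_(d k)}}
          * {ffun {k : 'I_n & 'I_(d k)} -> bool}) : R :=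
  match_ratio R [set x | (po.1 x != x) && po.2 x]
              (fun x => tag x) (fun x => tag (po.1 x)).

From HB Require Import structures.
From mathcomp Require Import all_boot all_order all_algebra.
From mathcomp Require Import fingroup perm.
From mathcomp Require Import reals sequences exp.
From mathcomp Require Import ring lra zify.
Set Implicit Arguments. Unset Strict Implicit. Unset Printing Implicit Defensive.
Import Order.TTheory GRing.Theory Num.Theory.
Local Open Scope ring_scope.

(* Both tails come from the Azuma-Hoeffding inequality for the Doob martingale
   that reveals the configuration one half-edge at a time.  Given the revealed
   part, two possible values of the next revealed piece are exchanged by an
   involution of the configurations: a transposition of two heads (directed
   model), of two partners, or the reversal of one edge (undirected model).
   It changes the maximum directed matching by at most 1, 2 and 1 edges, so
   consecutive conditional means of m(G) differ by at most 1/n, 2/n and 1/n.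
   In the undirected model the discarded half-edge is revealed first, moved by
   a transposition too.  There are at most sum_k d_k <= sum_k d_k^2 steps, which
   gives a sub-Gaussian bound on the moment generating function of m(G), and
   the Chernoff bound turns it into the stated tails. *)

Section SubGaussian.
Variable R : realType.

Lemma expR_le_quadratic (x : R) : x <= 1/2 -> expR x <= 1 + x + 2 * x ^+ 2.
Proof.
move=> x_small.
have eN := expR_ge1Dx (- x); rewrite expRN in eN.
have e0 := expR_gt0 x.
have e1x : expR x * (1 - x) <= 1.
  have : (1 - x) * expR x <= (expR x)^-1 * expR x by rewrite ler_pM2r.
  by rewrite mulVf ?gt_eqF // mulrC.
nra.
Qed.

Lemma weighted_hoeffding (J : finType) (w y : J -> R) (c l : R) : 0 <= c ->
  (forall j, 0 <= w j) -> \sum_j w j * y j = 0 ->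
  (forall j, 0 < w j -> `|y j| <= c) ->
  \sum_j w j * expR (l * y j) <= (\sum_j w j) * expR (2 * (l ^+ 2 * c ^+ 2)).
Proof.
move=> c0 w0 mean0 y_bound.
set t := `|l| * c.
have t0 : 0 <= t by rewrite mulr_ge0.
have -> : l ^+ 2 * c ^+ 2 = t ^+ 2 by rewrite exprMn real_normK ?num_real.
have ly_bound j : 0 < w j -> `|l * y j| <= t.
  by move/y_bound => yj; rewrite normrM ler_wpM2l.
have [t_small|t_large] := lerP t (1/2); last first.
  rewrite mulr_suml; apply: ler_sum => j _.
  have [->|wj0] := eqVneq (w j) 0; first by rewrite !mul0r.
  have wj_pos : 0 < w j by rewrite lt_def wj0 w0.
  rewrite ler_wpM2l // ler_expR.
  apply: le_trans (ler_norm _) _; apply: le_trans (ly_bound j wj_pos) _.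
  nra.
(* For [t <= 1/2] sum the quadratic bound on [expR]: the linear terms cancel. *)
apply: (@le_trans _ _ (\sum_j (w j + l * (w j * y j) + 2 * t ^+ 2 * w j))).
  apply: ler_sum => j _.
  have [->|wj0] := eqVneq (w j) 0; first by rewrite !(mul0r, mulr0, addr0).
  have wj_pos : 0 < w j by rewrite lt_def wj0 w0.
  have lyj := ly_bound j wj_pos.
  have lyj2 : (l * y j) ^+ 2 <= t ^+ 2.
    by rewrite -real_normK ?num_real // lerXn2r ?nnegrE ?normr_ge0.
  have lyj_small : l * y j <= 1/2.
    by apply: le_trans t_small; apply: le_trans lyj; apply: ler_norm.
  have : w j * expR (l * y j) <= w j * (1 + l * y j + 2 * (l * y j) ^+ 2).
    by rewrite ler_wpM2l // expR_le_quadratic.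
  nra.
rewrite !big_split /= -mulr_sumr mean0 mulr0 addr0 -mulr_sumr mulrC.
rewrite -{1}(mulr1 (\sum_j w j)) -mulrDr ler_wpM2l ?sumr_ge0 //.
by have := expR_ge1Dx (2 * t ^+ 2); rewrite addrC.
Qed.

Lemma mulr_card_unif_exp (U : finType) (A : {set U}) (f : U -> R) :
  #|A|%:R * unif_exp A f = \sum_(x in A) f x.
Proof.
rewrite /unif_exp; have [->|] := eqVneq A set0; first by rewrite cards0 big_set0 mul0r.
rewrite -card_gt0 => A_gt0; rewrite mulrC -mulrA mulVf ?mulr1 //.
by rewrite pnatr_eq0 -lt0n.
Qed.

(* [E exp (l (f - E f)) <= exp (l^2 V)] for the uniform law on [A], multiplied
   out by [#|A|] so that it is also meaningful for [A = set0]. *)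
Definition subgaussian (U : finType) (A : {set U}) (f : U -> R) (V : R) :=
  forall l : R,
    \sum_(x in A) expR (l * (f x - unif_exp A f)) <= #|A|%:R * expR (l ^+ 2 * V).

Lemma subgaussian_sub1 (U : finType) (A : {set U}) (f : U -> R) (V : R) (x0 : U) :
  A \subset [set x0] -> 0 <= V -> subgaussian A f V.
Proof.
move=> sA V0 l; have [x0A|x0NA] := boolP (x0 \in A).
  have -> : A = [set x0] by apply/eqP; rewrite eqEsubset sA sub1set x0A.
  rewrite /unif_exp big_set1 cards1 big_set1 divr1 subrr mulr0 expR0 mul1r.
  by rewrite -expR0 ler_expR mulr_ge0 ?sqr_ge0.
have -> : A = set0.
  apply/setP => x; rewrite inE; apply/negbTE/negP => xA.
  by move: (subsetP sA x xA) x0NA; rewrite inE => /eqP <-; rewrite xA.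
by rewrite big_set0 cards0 mul0r.
Qed.

Lemma subgaussian_set0 (U : finType) (f : U -> R) (V : R) : subgaussian set0 f V.
Proof. by move=> l; rewrite big_set0 cards0 mul0r. Qed.

Lemma subgaussian_mono (U : finType) (A : {set U}) (f : U -> R) (V V' : R) :
  subgaussian A f V -> V <= V' -> subgaussian A f V'.
Proof.
move=> sgV VV' l; apply: le_trans (sgV l) _; rewrite ler_wpM2l //.
by rewrite ler_expR ler_wpM2l ?sqr_ge0.
Qed.

Section Blocks.
Variables (U J : finType) (A : {set U}) (g : U -> J).
Local Notation B j := [set x in A | g x == j].

Lemma sum_blocks (F : U -> R) : \sum_(x in A) F x = \sum_j \sum_(x in B j) F x.
Proof.
rewrite (partition_big g xpredT) //=; apply: eq_bigr => j _.
by apply: eq_bigl => x; rewrite inE.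
Qed.

Lemma card_blocks : #|A|%:R = \sum_j (#|B j|%:R : R).
Proof.
rewrite -sum1_card natr_sum (sum_blocks (fun _ => 1)); apply: eq_bigr => j _.
by rewrite -sum1_card natr_sum.
Qed.

Lemma unif_exp_blocks (f : U -> R) (m : R) :
  \sum_j #|B j|%:R * (unif_exp (B j) f - m) = #|A|%:R * (unif_exp A f - m).
Proof.
under eq_bigr do rewrite mulrBr mulr_card_unif_exp.
by rewrite sumrB -sum_blocks -mulr_suml -card_blocks mulrBr mulr_card_unif_exp.
Qed.

Lemma unif_exp_block_dist (f : U -> R) (c : R) (j : J) :
  (forall j j', B j != set0 -> B j' != set0 -> `|unif_exp (B j) f - unif_exp (B j') f| <= c) ->
  B j != set0 -> `|unif_exp (B j) f - unif_exp A f| <= c.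
Proof.
move=> meanB Bj0; have A_pos : (0 : R) < #|A|%:R.
  rewrite ltr0n card_gt0; apply: contraNneq Bj0 => A0.
  by apply/eqP/setP => x; rewrite !inE A0 inE.
suff : `|#|A|%:R * (unif_exp A f - unif_exp (B j) f)| <= #|A|%:R * c.
  by rewrite normrM ger0_norm ?ler0n // ler_pM2l // distrC.
rewrite -unif_exp_blocks card_blocks mulr_suml.
apply: le_trans (ler_norm_sum _ _ _) _; apply: ler_sum => j' _.
rewrite normrM ger0_norm ?ler0n //; have [->|Bj'0] := eqVneq #|B j'| 0%N.
  by rewrite !mul0r.
by rewrite ler_wpM2l ?meanB // -card_gt0 lt0n.
Qed.

(* One step of the Azuma-Hoeffding argument: the block means form a
   martingale increment bounded by [c]. *)
Lemma subgaussian_partition (f : U -> R) (V c : R) :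
  0 <= c -> (forall j, subgaussian (B j) f V) ->
  (forall j j', B j != set0 -> B j' != set0 -> `|unif_exp (B j) f - unif_exp (B j') f| <= c) ->
  subgaussian A f (V + 2 * c ^+ 2).
Proof.
move=> c0 sgB meanB l; set mu := unif_exp A f.
have block_mgf j : \sum_(x in B j) expR (l * (f x - mu))
     <= #|B j|%:R * expR (l * (unif_exp (B j) f - mu)) * expR (l ^+ 2 * V).
  have -> : \sum_(x in B j) expR (l * (f x - mu)) = expR (l * (unif_exp (B j) f - mu)) *
      \sum_(x in B j) expR (l * (f x - unif_exp (B j) f)).
    by rewrite mulr_sumr; apply: eq_bigr => x _; rewrite -expRD; congr expR; ring.
  by rewrite [#|B j|%:R * _]mulrC -mulrA ler_wpM2l ?expR_ge0 ?sgB.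
rewrite sum_blocks; apply: le_trans (ler_sum _ (fun j _ => block_mgf j)) _.
rewrite -mulr_suml mulrDr expRD mulrA mulrC [_ * expR (l ^+ 2 * V)]mulrC.
rewrite -[X in _ <= X]mulrA ler_wpM2l ?expR_ge0 // card_blocks [l ^+ 2 * (2 * _)]mulrCA.
apply: weighted_hoeffding => //; first by rewrite unif_exp_blocks subrr mulr0.
by move=> j; rewrite ltr0n card_gt0 => /(unif_exp_block_dist meanB).
Qed.

End Blocks.

Lemma subgaussian_one_sided_tail (U : finType) (A : {set U}) (f : U -> R)
    (V eps s : R) :
  subgaussian A f V -> 0 < V -> 0 < eps -> s ^+ 2 = 1 ->
  #|[set x in A | eps < s * (f x - unif_exp A f)]|%:R
     <= #|A|%:R * expR (- (eps ^+ 2 / (4 * V))).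
Proof.
move=> sg V0 eps0 s2.
set l := eps / (2 * V).
have l0 : 0 < l by rewrite divr_gt0 // mulr_gt0.
have := sg (s * l); rewrite exprMn s2 mul1r => mgf.
set P := [set x in A | _].
have markov : #|P|%:R * expR (l * eps)
              <= \sum_(x in A) expR (s * l * (f x - unif_exp A f)).
  rewrite (bigID (fun x => eps < s * (f x - unif_exp A f))) /=.
  set Sout := (X in _ <= _ + X).
  have Sout0 : 0 <= Sout by apply: sumr_ge0 => x _; apply: expR_ge0.
  set Sin := (X in _ <= X + _).
  suff : #|P|%:R * expR (l * eps) <= Sin by lra.
  rewrite /Sin mulr_natl -sumr_const.
  rewrite [X in _ <= X](eq_bigl (fun x => x \in P)); last by move=> x; rewrite /P inE.
  apply: ler_sum => x; rewrite /P inE => /andP [_ hx]; rewrite ler_expR -mulrA.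
  by rewrite mulrCA ler_pM2l // ltW.
have -> : expR (- (eps ^+ 2 / (4 * V))) = expR (l ^+ 2 * V) / expR (l * eps).
  by rewrite -expRB; congr expR; rewrite /l; field; lra.
by rewrite mulrA ler_pdivlMr ?expR_gt0 // (le_trans markov).
Qed.

Lemma subgaussian_tail (U : finType) (A : {set U}) (f : U -> R) (V eps : R) :
  subgaussian A f V -> 0 < V -> 0 < eps ->
  unif_prob R A (fun x => eps < `|f x - unif_exp A f|)
     <= 2 * expR (- (eps ^+ 2 / (4 * V))).
Proof.
move=> sg V0 eps0; rewrite /unif_prob.
have [->|A0] := eqVneq #|A| 0%N; first by rewrite invr0 mulr0 mulr_ge0 ?expR_ge0.
have A_pos : (0 : R) < #|A|%:R by rewrite ltr0n lt0n.
rewrite ler_pdivrMr // mulrAC.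
pose P s := [set x in A | eps < s * (f x - unif_exp A f)].
have tails : [set x in A | eps < `|f x - unif_exp A f|] \subset P 1 :|: P (-1).
  apply/subsetP => x; rewrite !inE ltr_normr mul1r mulN1r.
  by case/andP => -> /orP [] ->; rewrite ?orbT.
apply: le_trans (_ : (#|P 1| + #|P (-1)|)%:R <= _).
  by rewrite ler_nat (leq_trans (subset_leq_card tails)) // cardsU leq_subr.
have := subgaussian_one_sided_tail sg V0 eps0 (expr1n _ 2).
have := subgaussian_one_sided_tail sg V0 eps0 (etrans (sqrrN 1) (expr1n R 2)).
rewrite natrD -/(P 1) -/(P (-1)) -mulrA; lra.
Qed.

Lemma unif_exp_dist_involution (U : finType) (A B : {set U}) (phi : U -> U)
    (f : U -> R) (c : R) :
  0 <= c -> {in A, forall x, phi x \in B} -> {in B, forall x, phi x \in A} ->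
  involutive phi -> {in A, forall x, `|f (phi x) - f x| <= c} ->
  `|unif_exp A f - unif_exp B f| <= c.
Proof.
move=> c0 AB BA phiK f_phi.
have injphi := can_inj phiK.
have -> : B = phi @: A.
  apply/setP => y; apply/idP/imsetP => [yB|[x xA ->]]; last exact: AB.
  by exists (phi y); rewrite ?BA ?phiK.
rewrite /unif_exp card_imset // big_imset /=; last by move=> x y _ _ /injphi.
have [->|A0] := eqVneq #|A| 0%N; first by rewrite invr0 !mulr0 subrr normr0.
have A_pos : (0 : R) < #|A|%:R by rewrite ltr0n lt0n.
rewrite -mulrBl -sumrB normrM [`|_^-1|]ger0_norm ?invr_ge0 ?ler0n // ler_pdivrMr //.
apply: le_trans (ler_norm_sum _ _ _) _.
by rewrite mulr_natr -sumr_const; apply: ler_sum => x xA; rewrite distrC f_phi.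
Qed.

Lemma unif_prob_le1 (T : finType) (S : {set T}) (P : pred T) : unif_prob R S P <= 1.
Proof.
rewrite /unif_prob; have [->|S0] := eqVneq #|S| 0%N; first by rewrite invr0 mulr0.
rewrite ler_pdivrMr ?ltr0n ?lt0n // mul1r ler_nat subset_leq_card //.
by apply/subsetP => x; rewrite inE => /andP [].
Qed.

Lemma ratio_dist_le (n x y k : nat) : (0 < n)%N ->
  (x <= y + k)%N -> (y <= x + k)%N ->
  `|x%:R / n%:R - y%:R / n%:R| <= k%:R / (n%:R : R).
Proof.
move=> n0 xy yx.
rewrite -mulrBl normrM [`|_^-1|]ger0_norm ?invr_ge0 ?ler0n // ler_pM2r ?invr_gt0 ?ltr0n //.
have xy' : (x%:R : R) <= y%:R + k%:R by rewrite -natrD ler_nat.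
have yx' : (y%:R : R) <= x%:R + k%:R by rewrite -natrD ler_nat.
rewrite ler_norml; apply/andP; split; lra.
Qed.

End SubGaussian.

Lemma eq_tpermL (T : finType) (u v a q : T) : (tperm u v a == q) = (a == tperm u v q).
Proof. by rewrite -{1}(tpermK u v q) (inj_eq perm_inj). Qed.

Section DirectedMatchings.
Variables (E : finType) (n : nat) (src : E -> 'I_n).

Lemma dmatching_subset (dst dst' : E -> 'I_n) (M M' : {set E}) :
  dmatching src dst M -> M' \subset M -> {in M', dst' =1 dst} ->
  dmatching src dst' M'.
Proof.
move=> /forallP mM sM'M dst'E; apply/forallP => v; have /andP [out_le1 in_le1] := mM v.
apply/andP; split.
  apply: leq_trans out_le1; apply: subset_leq_card; apply/subsetP => e.
  by rewrite !inE => /andP [eM' ->]; rewrite (subsetP sM'M _ eM').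
apply: leq_trans in_le1; apply: subset_leq_card; apply/subsetP => e.
by rewrite !inE => /andP [eM']; rewrite dst'E // => ->; rewrite (subsetP sM'M _ eM').
Qed.

Lemma max_dmatch_leq (Es Es' : {set E}) (dst dst' : E -> 'I_n) (k : nat) :
  (forall M : {set E}, M \subset Es -> dmatching src dst M ->
     exists2 M' : {set E}, (M' \subset Es') && dmatching src dst' M' & (#|M| <= #|M'| + k)%N) ->
  (max_dmatch Es src dst <= max_dmatch Es' src dst' + k)%N.
Proof.
move=> extend; apply/bigmax_leqP => M /andP [sMEs mM].
have [M' M'_ok le_M'] := extend M sMEs mM.
by apply: leq_trans le_M' _; rewrite leq_add2r; apply: leq_bigmax_cond.
Qed.

Lemma max_dmatch_leq_off (Es Es' S : {set E}) (dst dst' : E -> 'I_n) (k : nat) :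
  (forall e, e \notin S -> ((e \in Es) = (e \in Es')) /\ dst e = dst' e) ->
  (#|Es :&: S| <= k)%N ->
  (max_dmatch Es src dst <= max_dmatch Es' src dst' + k)%N.
Proof.
move=> agree cardS; apply: max_dmatch_leq => M sMEs mM.
exists (M :\: S); last first.
  rewrite -(cardsID S M) addnC leq_add2l (leq_trans _ cardS) //.
  by rewrite subset_leq_card // setSI.
apply/andP; split.
  apply/subsetP => e; rewrite inE => /andP [eNS eM].
  by have [<- _] := agree e eNS; apply: (subsetP sMEs).
apply: dmatching_subset mM (subsetDl _ _) _.
by move=> e; rewrite inE => /andP [eNS _]; have [_ ->] := agree e eNS.
Qed.

Section SwapHeads.
Variables (H : finType) (head_vertex : H -> 'I_n) (s s' : E -> H) (b b' : H).
Hypothesis s'E : forall e, s' e = tperm b b' (s e).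

Let dst t := head_vertex (s t).
Let dst' t := head_vertex (s' t).

Lemma dmatching_head_inj (M : {set E}) : dmatching src dst M -> {in M &, injective s}.
Proof.
move=> /forallP mM e1 e2 e1M e2M se.
have /andP [_ /card_le1_eqP in_le1] := mM (head_vertex (s e1)).
by apply: (in_le1 e2 e1); rewrite inE ?e1M ?e2M /dst ?se eqxx.
Qed.

(* If the head [c] is unused by [M], dropping the (at most one) edge of [M]
   into [c'] leaves a matching on which the swap acts trivially. *)
Lemma dmatching_swap_unused_head (M : {set E}) (c c' : H) :
  dmatching src dst M -> tperm b b' = tperm c c' -> {in M, forall e, s e != c} ->
  exists2 M' : {set E}, (M' \subset setT) && dmatching src dst' M' & (#|M| <= #|M'| + 1)%N.
Proof.
move=> mM bc cNused; have s_inj := dmatching_head_inj mM.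
exists [set e in M | s e != c']; last first.
  have -> : [set e in M | s e != c'] = M :\: [set e | s e == c'].
    by apply/setP => e; rewrite !inE andbC.
  rewrite -(cardsID [set e | s e == c'] M) addnC leq_add2l.
  apply/card_le1_eqP => x y; rewrite !inE => /andP [xM /eqP sx] /andP [yM /eqP sy].
  by apply: s_inj => //; rewrite sx sy.
rewrite subsetT /=; apply: dmatching_subset mM _ _.
  by apply/subsetP => e; rewrite inE => /andP [].
move=> e; rewrite inE => /andP [eM sNc']; rewrite /dst /dst' s'E bc tpermD //.
  by rewrite eq_sym cNused.
by rewrite eq_sym.
Qed.

Lemma max_dmatch_swap_heads :
  (max_dmatch setT src dst <= max_dmatch setT src dst' + 1)%N.
Proof.
apply: max_dmatch_leq => M _ mM; have s_inj := dmatching_head_inj mM.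
have [t1 /andP [t1M /eqP st1] | b_unused] := pickP [pred t in M | s t == b]; last first.
  apply: (dmatching_swap_unused_head mM (erefl _)) => e eM.
  by have := b_unused e; rewrite /= eM /= => ->.
have [t2 /andP [t2M /eqP st2] | b'_unused] := pickP [pred t in M | s t == b']; last first.
  apply: (dmatching_swap_unused_head mM (tpermC b b')) => e eM.
  by have := b'_unused e; rewrite /= eM /= => ->.
(* Both heads are used: then [s' = s \o tperm t1 t2] on [M]. *)
have s'_perm : {in M, forall e, s' e = s (tperm t1 t2 e)}.
  move=> e eM; rewrite s'E.
  case: (tpermP t1 t2 e) => [->|->|et1 et2]; rewrite ?st1 ?st2 ?tpermL ?tpermR //.
  rewrite tpermD // -?st1 -?st2; apply/eqP => /s_inj sE.
    by apply: et1; rewrite sE.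
  by apply: et2; rewrite sE.
have tperm_M e : e \in M -> tperm t1 t2 e \in M by move=> eM; case: tpermP.
exists M; rewrite ?subsetT ?leq_addr //=.
apply/forallP => v; have /forallP /(_ v) /andP [-> in_le1] := mM; apply: leq_trans in_le1.
rewrite -(card_imset _ (@perm_inj _ (tperm t1 t2))) subset_leq_card //.
apply/subsetP => _ /imsetP [e /setIdP [eM /eqP <-] ->].
by rewrite inE tperm_M //= /dst /dst' s'_perm.
Qed.

End SwapHeads.
End DirectedMatchings.

Lemma card_half_edges_le (n : nat) (d : 'I_n -> nat) :
  (#|[set: {k : 'I_n & 'I_(d k)}]| <= \sum_k d k ^ 2)%N.
Proof.
rewrite cardsT card_tagged sumnE big_map big_enum /=.
by apply: leq_sum => i _; rewrite card_ord; nia.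
Qed.


Section DirectedConfigurationModel.
Variables (R : realType) (n : nat) (dp dm : 'I_n -> nat).
Hypothesis n_gt0 : (0 < n)%N.

Local Notation T := {k : 'I_n & 'I_(dm k)}.
Local Notation H := {k : 'I_n & 'I_(dp k)}.
Local Notation conf := {ffun T -> H}.
Local Notation f := (@dcm_ratio R n dp dm).

Definition dcm_fiber (F : {set T}) (s0 : conf) : {set conf} :=
  [set s in dcm_space dp dm | [forall t, (t \notin F) ==> (s t == s0 t)]].

Lemma dcm_fiberP (F : {set T}) (s0 s : conf) :
  reflect (injective s /\ forall t, t \notin F -> s t = s0 t) (s \in dcm_fiber F s0).
Proof.
rewrite !inE; apply: (iffP andP) => [[/injectiveP s_inj /forallP s_off]|[s_inj s_off]].
  by split => // t tNF; apply/eqP; move/implyP: (s_off t); apply.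
split; first exact/injectiveP.
by apply/forallP => t; apply/implyP => tNF; rewrite s_off.
Qed.

Lemma dcm_fiber_set0 (s0 : conf) : dcm_fiber set0 s0 \subset [set s0].
Proof.
apply/subsetP => s /dcm_fiberP [_ s_off]; rewrite inE; apply/eqP/ffunP => t.
by rewrite s_off ?inE.
Qed.

Lemma dcm_fiber_block (F : {set T}) (s0 s1 : conf) (a : T) :
  s1 \in dcm_fiber F s0 ->
  [set s in dcm_fiber F s0 | s a == s1 a] = dcm_fiber (F :\ a) s1.
Proof.
move=> /dcm_fiberP [_ s1_off]; apply/setP => s; rewrite inE.
apply/andP/dcm_fiberP => [[/dcm_fiberP [s_inj s_off] /eqP sa]|[s_inj s_off]].
  split => // t; rewrite !inE negb_and negbK.
  by case: (eqVneq t a) => [->|_ /= tNF]; rewrite ?sa // s_off ?s1_off.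
split; last by rewrite s_off // !inE eqxx.
apply/dcm_fiberP; split => // t tNF.
by rewrite s_off ?s1_off // !inE (negbTE tNF) andbF.
Qed.

Definition swap_heads (b b' : H) (s : conf) : conf := [ffun t => tperm b b' (s t)].

Lemma swap_headsK (b b' : H) : involutive (swap_heads b b').
Proof. by move=> s; apply/ffunP => t; rewrite !ffunE tpermK. Qed.

Lemma dcm_ratio_swap_heads (b b' : H) (s : conf) :
  `|f (swap_heads b b' s) - f s| <= 1%:R / n%:R.
Proof.
rewrite /dcm_ratio /match_ratio distrC; apply: ratio_dist_le => //.
  by apply: max_dmatch_swap_heads => t; rewrite ffunE.
by apply: (@max_dmatch_swap_heads _ _ _ _ _ _ _ b b') => t; rewrite ffunE tpermK.
Qed.

Lemma swap_heads_fiber (F : {set T}) (s0 sb sb' s : conf) (a : T) :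
  a \in F -> sb \in dcm_fiber F s0 -> sb' \in dcm_fiber F s0 ->
  s \in dcm_fiber F s0 -> swap_heads (sb a) (sb' a) s \in dcm_fiber F s0.
Proof.
move=> aF /dcm_fiberP [sb_inj sb_off] /dcm_fiberP [sb'_inj sb'_off].
move=> /dcm_fiberP [s_inj s_off]; apply/dcm_fiberP; split.
  by move=> x y; rewrite !ffunE => /perm_inj /s_inj.
move=> t tNF; have ta : t != a by apply: contraNneq tNF => ->.
have sbN : sb a != s0 t by rewrite -sb_off //; apply: contra_neq ta => /sb_inj ->.
have sb'N : sb' a != s0 t by rewrite -sb'_off //; apply: contra_neq ta => /sb'_inj ->.
by rewrite ffunE s_off // tpermD.
Qed.

Lemma dcm_fiber_subgaussian (F : {set T}) (s0 : conf) :
  subgaussian (dcm_fiber F s0) f (#|F|%:R * (2 * n%:R^-1 ^+ 2)).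
Proof.
have c0 : (0 : R) <= n%:R^-1 by rewrite invr_ge0 ler0n.
have V0 k : (0 : R) <= k%:R * (2 * n%:R^-1 ^+ 2) by rewrite !mulr_ge0 ?exprn_ge0.
move: {2}#|F| (leqnn #|F|) => m; elim: m F s0 => [|m IH] F s0 F_le.
  have -> : F = set0 by apply/eqP; rewrite -cards_eq0 -leqn0.
  exact: subgaussian_sub1 (dcm_fiber_set0 s0) (V0 _).
have [->|/set0Pn [a aF]] := eqVneq F set0.
  exact: subgaussian_sub1 (dcm_fiber_set0 s0) (V0 _).
(* Revealing the head matched to [a] is a martingale step of size [1/n]. *)
have -> : #|F|%:R * (2 * n%:R^-1 ^+ 2) =
    #|F :\ a|%:R * (2 * n%:R^-1 ^+ 2) + 2 * n%:R^-1 ^+ 2 :> R.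
  by rewrite (cardsD1 a F) aF add1n -addn1 natrD mulrDl mul1r.
apply: (subgaussian_partition (g := fun s : conf => s a)) => // [b|b b'].
  have [->|/set0Pn [s1 /setIdP [s1F /eqP <-]]] :=
    eqVneq [set s in dcm_fiber F s0 | s a == b] set0; first exact: subgaussian_set0.
  rewrite dcm_fiber_block //; apply: IH.
  by rewrite -ltnS (leq_trans _ F_le) // (cardsD1 a F) aF.
move=> /set0Pn [sb /setIdP [sbF /eqP <-]] /set0Pn [sb' /setIdP [sb'F /eqP <-]].
apply: (unif_exp_dist_involution (phi := swap_heads (sb a) (sb' a))) => //.
- move=> s /setIdP [sF /eqP sa]; rewrite inE swap_heads_fiber //=.
  by rewrite ffunE sa tpermL.
- move=> s /setIdP [sF /eqP sa]; rewrite inE swap_heads_fiber //=.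
  by rewrite ffunE sa tpermR.
- exact: swap_headsK.
- by move=> s _; rewrite -[n%:R^-1]mul1r dcm_ratio_swap_heads.
Qed.

Lemma dcm_concentration (eps : R) : 0 < eps ->
  unif_prob R (dcm_space dp dm) (fun s => eps < `|f s - unif_exp (dcm_space dp dm) f|)
    <= 2 * expR (- (eps ^+ 2 * n%:R ^+ 2) / (8 * (\sum_k (dp k + dm k) ^ 2)%N%:R)).
Proof.
move=> eps0; set S := (\sum_k (dp k + dm k) ^ 2)%N.
have [S0|S_neq0] := eqVneq S 0%N.
  by rewrite S0 mulr0 invr0 mulr0 expR0 mulr1 (le_trans (unif_prob_le1 _ _ _)) ?ler1n.
have [->|/set0Pn [s0 s0_in]] := eqVneq (dcm_space dp dm) set0.
  by rewrite /unif_prob cards0 invr0 mulr0 mulr_ge0 ?expR_ge0.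
have -> : dcm_space dp dm = dcm_fiber setT s0.
  apply/setP => s; apply/idP/dcm_fiberP => [|[s_inj _]]; last by rewrite inE; apply/injectiveP.
  by rewrite inE => /injectiveP s_inj; split => // t; rewrite inE.
have n_pos : (0 : R) < n%:R by rewrite ltr0n.
have S_pos : (0 : R) < S%:R by rewrite ltr0n lt0n.
have -> : - (eps ^+ 2 * n%:R ^+ 2) / (8 * S%:R) =
    - (eps ^+ 2 / (4 * (S%:R * (2 * n%:R^-1 ^+ 2)))).
  by field; rewrite !gt_eqF.
apply: subgaussian_tail => //; last by rewrite !mulr_gt0 ?exprn_gt0 ?invr_gt0.
apply: subgaussian_mono (dcm_fiber_subgaussian setT s0) _.
rewrite ler_wpM2r ?mulr_ge0 ?exprn_ge0 ?invr_ge0 ?ler0n // ler_nat.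
apply: leq_trans (card_half_edges_le dm) _; apply: leq_sum => k _; nia.
Qed.

End DirectedConfigurationModel.

Section ConfigurationModelOriented.
Variables (R : realType) (n : nat) (d : 'I_n -> nat).
Hypothesis n_gt0 : (0 < n)%N.

Local Notation X := {k : 'I_n & 'I_(d k)}.
Local Notation conf := ({ffun X -> X} * {ffun X -> bool})%type.
Local Notation C := (cmo_space d).
Local Notation f := (@cmo_ratio R n d).

Definition cmo_discarded (po : conf) : {set X} := [set q | po.1 q == q].

Definition cmo_edges (po : conf) : {set X} := [set q | (po.1 q != q) && po.2 q].

Local Notation mm po := (max_dmatch (cmo_edges po) (fun q => tag q) (fun q => tag (po.1 q))).

Lemma cmo_spaceP (po : conf) :
  reflect [/\ involutive po.1, #|cmo_discarded po| = odd (\sum_k d k) &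
              forall q, if po.1 q == q then po.2 q = false else po.2 (po.1 q) = ~~ po.2 q]
          (po \in C).
Proof.
rewrite inE; apply: (iffP and3P) => [[/forallP p_inv /eqP card_fix /forallP o_ok]|].
  split=> [q||q]; [exact/eqP | exact: card_fix | by have := o_ok q; case: ifP => _ /eqP].
case=> p_inv card_fix o_ok; split; first by apply/forallP => q; rewrite p_inv.
  exact/eqP.
by apply/forallP => q; have := o_ok q; case: ifP => _ ->.
Qed.

Lemma cmo_ratio_dist_le (po po' : conf) (k : nat) :
  (mm po <= mm po' + k)%N -> (mm po' <= mm po + k)%N -> `|f po' - f po| <= k%:R / n%:R.
Proof. by move=> le1 le2; apply: ratio_dist_le. Qed.

(* An edge [{q, po.1 q}] is listed once, at the endpoint where it is oriented out. *)
Lemma cmo_edges_pair (po : conf) (q : X) : po \in C -> po.1 q != q ->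
  (#|cmo_edges po :&: [set q; po.1 q]| <= 1)%N.
Proof.
case/cmo_spaceP => _ _ o_ok pq; have := o_ok q; rewrite (negbTE pq) => o_pq.
apply: (@leq_trans #|[set if po.2 q then q else po.1 q]|); last by rewrite cards1.
apply/subset_leq_card/subsetP => e; rewrite !inE => /andP [/andP [_ oe] /orP [] /eqP ee]; subst e.
  by rewrite oe.
by move: oe; rewrite o_pq; case: (po.2 q) => //= _; rewrite eqxx.
Qed.

Lemma cmo_edges_fixed (po : conf) (q : X) : po.1 q = q -> cmo_edges po :&: [set q; po.1 q] = set0.
Proof.
move=> pq; apply/setP => e; rewrite !inE pq orbb.
by case: (eqVneq e q) => [->|]; rewrite ?pq ?eqxx ?andbF.
Qed.

Definition cmo_flip (x : X) (po : conf) : conf :=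
  (po.1, [ffun q => if (q == x) || (q == po.1 x) then ~~ po.2 q else po.2 q]).

Lemma cmo_flipK (x : X) : involutive (cmo_flip x).
Proof.
case=> p o; congr pair; apply/ffunP => q; rewrite !ffunE /=.
by case: ifP => cond; rewrite cond ?negbK.
Qed.

Lemma cmo_flip_space (x : X) (po : conf) :
  po \in C -> po.1 x != x -> cmo_flip x po \in C.
Proof.
case/cmo_spaceP => p_inv card_fix o_ok px; apply/cmo_spaceP; split => // q.
rewrite /cmo_flip /= !ffunE.
have p_inj : injective po.1 by apply: can_inj p_inv.
have := o_ok q; case: ifP => [/eqP pq|pq].
  have qx : (q == x) = false by apply/eqP => qx; move: px; rewrite -qx pq eqxx.
  have qpx : (q == po.1 x) = false.
    by apply/eqP => qpx; move: px; rewrite -qpx -[x]p_inv -qpx pq eqxx.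
  by rewrite qx qpx.
have -> : (po.1 q == x) || (po.1 q == po.1 x) = (q == x) || (q == po.1 x).
  rewrite orbC; congr orb; first by rewrite (inj_eq p_inj).
  by apply/eqP/eqP => [<-|->]; rewrite p_inv.
by case: ifP => _ ->.
Qed.

Lemma max_match_flip (x : X) (po : conf) :
  po \in C -> po.1 x != x -> (mm po <= mm (cmo_flip x po) + 1)%N.
Proof.
move=> poC px; apply: (@max_dmatch_leq_off _ _ _ _ _ [set x; po.1 x]).
  by move=> e; rewrite !inE negb_or => /andP [/negbTE ex /negbTE epx]; rewrite ffunE ex epx.
exact: cmo_edges_pair.
Qed.

Lemma cmo_ratio_flip (x : X) (po : conf) :
  po \in C -> po.1 x != x -> `|f (cmo_flip x po) - f po| <= 1%:R / n%:R.
Proof.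
move=> poC px; apply: cmo_ratio_dist_le; first exact: max_match_flip.
by have := max_match_flip (cmo_flip_space poC px) px; rewrite cmo_flipK.
Qed.

Definition cmo_switch (u v : X) (po : conf) : conf :=
  ([ffun q => tperm u v (po.1 (tperm u v q))], [ffun q => po.2 (tperm u v q)]).

Lemma cmo_switchK (u v : X) : involutive (cmo_switch u v).
Proof. by case=> p o; congr pair; apply/ffunP => q; rewrite !ffunE !tpermK. Qed.

Lemma cmo_switchC (u v : X) : cmo_switch u v = cmo_switch v u.
Proof. by rewrite /cmo_switch tpermC. Qed.

Lemma cmo_discarded_switch (u v : X) (po : conf) :
  cmo_discarded (cmo_switch u v po) = tperm u v @^-1: cmo_discarded po.
Proof. by apply/setP => q; rewrite !inE ffunE eq_tpermL. Qed.

Lemma cmo_switch_space (u v : X) (po : conf) : po \in C -> cmo_switch u v po \in C.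
Proof.
case/cmo_spaceP => p_inv card_fix o_ok; apply/cmo_spaceP; split.
- by move=> q; rewrite !ffunE tpermK p_inv tpermK.
- by rewrite cmo_discarded_switch card_preimset //; apply: perm_inj.
- by move=> q; rewrite !ffunE eq_tpermL tpermK; exact: o_ok.
Qed.

Lemma max_match_switch (u v : X) (po : conf) (k : nat) : po \in C ->
  (#|cmo_edges po :&: ([set u; po.1 u] :|: [set v; po.1 v])| <= k)%N ->
  (mm po <= mm (cmo_switch u v po) + k)%N.
Proof.
case/cmo_spaceP => p_inv _ _; apply: max_dmatch_leq_off => e.
rewrite !inE !negb_or => /andP [/andP [eu epu] /andP [ev epv]].
have peu : po.1 e != u by apply: contra_neq epu => <-; rewrite p_inv.
have pev : po.1 e != v by apply: contra_neq epv => <-; rewrite p_inv.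
have fix_e : tperm u v e = e by rewrite tpermD // eq_sym.
have fix_pe : tperm u v (po.1 e) = po.1 e by rewrite tpermD // eq_sym.
by rewrite !ffunE fix_e fix_pe.
Qed.

Lemma cmo_ratio_switch (u v : X) (po : conf) : po \in C -> po.1 u != u -> po.1 v != v ->
  `|f (cmo_switch u v po) - f po| <= 2%:R / n%:R.
Proof.
have pair_bound po' : po' \in C -> po'.1 u != u -> po'.1 v != v ->
    (mm po' <= mm (cmo_switch u v po') + 2)%N.
  move=> po'C pu pv; apply: max_match_switch => //; rewrite setIUr.
  by rewrite (leq_trans (leq_card_setU _ _).1) // -[2%N]/(1 + 1)%N leq_add ?cmo_edges_pair.
move=> poC pu pv; apply: cmo_ratio_dist_le; first exact: pair_bound.
have := pair_bound _ (cmo_switch_space u v poC); rewrite cmo_switchK; apply.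
  by rewrite ffunE tpermL eq_tpermL tpermL.
by rewrite ffunE tpermR eq_tpermL tpermR.
Qed.

Lemma cmo_ratio_switch_discarded (u v : X) (po : conf) :
  po \in C -> po.1 u = u -> po.1 v != v -> `|f (cmo_switch u v po) - f po| <= 1%:R / n%:R.
Proof.
have discarded_bound po' u' v' : po' \in C -> po'.1 u' = u' -> po'.1 v' != v' ->
    (mm po' <= mm (cmo_switch u' v' po') + 1)%N.
  move=> po'C pu pv; apply: max_match_switch => //.
  by rewrite setIUr cmo_edges_fixed // set0U cmo_edges_pair.
move=> poC pu pv; apply: cmo_ratio_dist_le; first exact: discarded_bound.
have := discarded_bound _ v u (cmo_switch_space u v poC).
rewrite cmo_switchC cmo_switchK; apply; rewrite ffunE.
  by rewrite tpermL pu tpermR.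
by rewrite tpermR eq_tpermL tpermR.
Qed.

Definition cmo_fiber (F : {set X}) (po0 : conf) : {set conf} :=
  [set po in C | [forall q, (q \notin F) ==> (po.1 q == po0.1 q) && (po.2 q == po0.2 q)]].

Lemma cmo_fiberP (F : {set X}) (po0 po : conf) :
  reflect [/\ po \in C, forall q, q \notin F -> po.1 q = po0.1 q
            & forall q, q \notin F -> po.2 q = po0.2 q]
          (po \in cmo_fiber F po0).
Proof.
apply: (iffP setIdP) => [[poC /forallP agree]|[poC agree1 agree2]].
  by split => // q qNF; have /implyP/(_ qNF)/andP [/eqP ? /eqP ?] := agree q.
by split => //; apply/forallP => q; apply/implyP => qNF; rewrite agree1 ?agree2 ?eqxx.
Qed.

Lemma cmo_fiber_set0 (po0 : conf) : cmo_fiber set0 po0 \subset [set po0].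
Proof.
apply/subsetP => -[p o] /cmo_fiberP [_ agree1 agree2]; rewrite inE; apply/eqP.
rewrite [po0]surjective_pairing; congr pair; apply/ffunP => q.
  by rewrite agree1 ?inE.
by rewrite agree2 ?inE.
Qed.

Lemma cmo_fiber_block (F : {set X}) (po0 po2 : conf) (x : X) :
  po2 \in cmo_fiber F po0 -> po2.1 x != x ->
  [set po in [set po in cmo_fiber F po0 | po.1 x == po2.1 x] | po.2 x == po2.2 x]
    = cmo_fiber (F :\ x :\ po2.1 x) po2.
Proof.
move=> /cmo_fiberP [po2C agree1 agree2] p2x; have [p2_inv _ o2_ok] := cmo_spaceP _ po2C.
have notin_F2 q : q \notin F :\ x :\ po2.1 x -> [\/ q = po2.1 x, q = x | q \notin F].
  case: (eqVneq q (po2.1 x)) => [-> _|qy]; first by constructor 1.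
  case: (eqVneq q x) => [-> _|qx]; first by constructor 2.
  by rewrite !inE qy qx /= => qNF; constructor 3.
apply/setP => po; apply/idP/idP.
  case/setIdP => /setIdP [/cmo_fiberP [poC agree1' agree2'] /eqP px] /eqP ox.
  have [p_inv _ o_ok] := cmo_spaceP _ poC.
  apply/cmo_fiberP; split => // q /notin_F2 [->|->|qNF].
  - by rewrite -{1}px p_inv p2_inv.
  - exact: px.
  - by rewrite agree1' ?agree1.
  - have := o_ok x; rewrite px (negbTE p2x) => ->.
    by have := o2_ok x; rewrite (negbTE p2x) => ->; rewrite ox.
  - exact: ox.
  - by rewrite agree2' ?agree2.
case/cmo_fiberP => poC agree1' agree2'.
have xNF2 : x \notin F :\ x :\ po2.1 x by rewrite !inE eqxx andbF.
have qNF2 q : q \notin F -> q \notin F :\ x :\ po2.1 x.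
  by move=> qNF; rewrite !inE (negbTE qNF) !andbF.
apply/setIdP; split; last by rewrite agree2'.
apply/setIdP; split; last by rewrite agree1'.
apply/cmo_fiberP; split => // q qNF.
  by rewrite agree1' ?qNF2 // (agree1 _ qNF).
by rewrite agree2' ?qNF2 // (agree2 _ qNF).
Qed.

Section Fiber.
Variables (F : {set X}) (po0 : conf).
Hypothesis fiber_closed : forall q, q \notin F -> po0.1 q \notin F.
Hypothesis fiber_unfixed : forall po, po \in cmo_fiber F po0 -> forall q, q \in F -> po.1 q != q.

Local Notation B := (cmo_fiber F po0).

Lemma cmo_fiber_partner (po : conf) (x : X) : po \in B -> x \in F -> po.1 x \in F.
Proof.
move=> /cmo_fiberP [/cmo_spaceP [p_inv _ _] agree1 _] xF; apply/negPn/negP => pxNF.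
by have := fiber_closed pxNF; rewrite -agree1 // p_inv xF.
Qed.

Lemma cmo_switch_fiber (po : conf) (u v : X) :
  u \in F -> v \in F -> po \in B -> cmo_switch u v po \in B.
Proof.
move=> uF vF /cmo_fiberP [poC agree1 agree2]; apply/cmo_fiberP.
have fix_out q : q \notin F -> tperm u v q = q.
  by move=> qNF; rewrite tpermD //; apply: contraNneq qNF => <-.
split => [|q qNF|q qNF]; first exact: cmo_switch_space.
  by rewrite ffunE (fix_out q qNF) agree1 // fix_out ?fiber_closed.
by rewrite ffunE (fix_out q qNF) agree2.
Qed.

Lemma cmo_flip_fiber (po : conf) (x : X) : x \in F -> po \in B -> cmo_flip x po \in B.
Proof.
move=> xF poB; have pxF := cmo_fiber_partner poB xF.
move: (poB) => /cmo_fiberP [poC agree1 agree2]; apply/cmo_fiberP.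
split => [|q qNF|q qNF]; [by rewrite cmo_flip_space ?fiber_unfixed | exact: agree1 |].
have [qx qpx] : q != x /\ q != po.1 x.
  by split; apply: contraNneq qNF => ->.
by rewrite ffunE (negbTE qx) (negbTE qpx) agree2.
Qed.

Lemma orientation_blocks_dist (x y : X) (b b' : bool) : x \in F ->
  `|unif_exp [set po in [set po in B | po.1 x == y] | po.2 x == b] f
    - unif_exp [set po in [set po in B | po.1 x == y] | po.2 x == b'] f| <= 1 * n%:R^-1.
Proof.
move=> xF; have [<-|bb'] := eqVneq b b'; first by rewrite subrr normr0 mulr_ge0 ?invr_ge0.
have flip_block po c : po \in [set po in [set po in B | po.1 x == y] | po.2 x == c] ->
    cmo_flip x po \in [set po in [set po in B | po.1 x == y] | po.2 x == ~~ c].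
  case/setIdP => /setIdP [poB pxy] /eqP <-.
  apply/setIdP; split; last by rewrite ffunE eqxx.
  by apply/setIdP; split; [exact: cmo_flip_fiber | exact: pxy].
have b'E : b' = ~~ b by case: (b) (b') bb' => -[].
apply: (unif_exp_dist_involution (phi := cmo_flip x)) => //.
- by rewrite mulr_ge0 ?invr_ge0.
- by move=> po /flip_block; rewrite b'E.
- by move=> po /flip_block; rewrite b'E negbK.
- exact: cmo_flipK.
- move=> po /setIdP [/setIdP [poB _] _].
  by rewrite cmo_ratio_flip ?fiber_unfixed //; case/cmo_fiberP: poB.
Qed.

Lemma partner_blocks_dist (x y y' : X) : x \in F ->
  [set po in B | po.1 x == y] != set0 -> [set po in B | po.1 x == y'] != set0 ->
  `|unif_exp [set po in B | po.1 x == y] f - unif_exp [set po in B | po.1 x == y'] f|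
    <= 2 * n%:R^-1.
Proof.
move=> xF /set0Pn [pa /setIdP [paB /eqP <-]] /set0Pn [pb /setIdP [pbB /eqP <-]].
have [-> |yy'] := eqVneq (pa.1 x) (pb.1 x); first by rewrite subrr normr0 mulr_ge0 ?invr_ge0.
have [yF y'F] := (cmo_fiber_partner paB xF, cmo_fiber_partner pbB xF).
have [yx y'x] : pa.1 x != x /\ pb.1 x != x by rewrite !fiber_unfixed.
have switch_block po z z' : z \in F -> z' \in F -> z != x -> z' != x ->
    po \in [set po in B | po.1 x == z] -> cmo_switch z z' po \in [set po in B | po.1 x == z'].
  move=> zF z'F zx z'x /setIdP [poB /eqP pxz].
  apply/setIdP; split; first exact: cmo_switch_fiber.
  by rewrite !ffunE (tpermD zx z'x) pxz tpermL.
apply: (unif_exp_dist_involution (phi := cmo_switch (pa.1 x) (pb.1 x))).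
- by rewrite mulr_ge0 ?invr_ge0.
- by move=> po; apply: switch_block.
- by move=> po; rewrite cmo_switchC; apply: switch_block.
- exact: cmo_switchK.
- move=> po /setIdP [poB _]; rewrite cmo_ratio_switch ?fiber_unfixed //.
  by case/cmo_fiberP: poB.
Qed.

Lemma partner_block_subgaussian (x y : X) (V : R) : x \in F -> 0 <= V ->
  (forall po2, po2 \in B -> po2.1 x = y -> subgaussian (cmo_fiber (F :\ x :\ y) po2) f V) ->
  subgaussian [set po in B | po.1 x == y] f (V + 2 * (1 * n%:R^-1) ^+ 2).
Proof.
move=> xF V0 sg_sub.
apply: (subgaussian_partition (g := fun po : conf => po.2 x)) => [||b b' _ _].
- by rewrite mulr_ge0 ?invr_ge0.
- move=> b; have [->|/set0Pn [po2 /setIdP [/setIdP [po2B /eqP po2x] /eqP <-]]] :=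
    eqVneq [set po in [set po in B | po.1 x == y] | po.2 x == b] set0.
    exact: subgaussian_set0.
  by rewrite -po2x cmo_fiber_block ?fiber_unfixed // po2x; apply: sg_sub.
- exact: orientation_blocks_dist.
Qed.

Lemma cmo_fiber_block_closed (po2 : conf) (x q : X) : po2 \in B -> x \in F ->
  q \notin F :\ x :\ po2.1 x -> po2.1 q \notin F :\ x :\ po2.1 x.
Proof.
move=> po2B xF; have [po2C agree1 _] := cmo_fiberP _ _ _ po2B.
have [p2_inv _ _] := cmo_spaceP _ po2C.
case: (eqVneq q (po2.1 x)) => [-> _|qy]; first by rewrite p2_inv in_setD1 setD11 andbF.
case: (eqVneq q x) => [-> _|qx]; first by rewrite setD11.
rewrite !inE qy qx /= => qNF; rewrite agree1 // (negbTE (fiber_closed qNF)).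
by rewrite !andbF.
Qed.

Lemma cmo_fiber_block_unfixed (po2 po : conf) (x q : X) : po2 \in B -> x \in F ->
  po \in cmo_fiber (F :\ x :\ po2.1 x) po2 -> q \in F :\ x :\ po2.1 x -> po.1 q != q.
Proof.
move=> po2B xF; rewrite -(cmo_fiber_block po2B (fiber_unfixed po2B xF)).
case/setIdP => /setIdP [poB _] _.
by rewrite !inE => /and3P [_ _ qF]; apply: fiber_unfixed.
Qed.

End Fiber.

Lemma cmo_fiber_subgaussian (F : {set X}) (po0 : conf) :
  (forall q, q \notin F -> po0.1 q \notin F) ->
  (forall po, po \in cmo_fiber F po0 -> forall q, q \in F -> po.1 q != q) ->
  subgaussian (cmo_fiber F po0) f (#|F|%:R * (5 * n%:R^-1 ^+ 2)).
Proof.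
have V0 k : (0 : R) <= k%:R * (5 * n%:R^-1 ^+ 2) by rewrite !mulr_ge0 ?exprn_ge0 ?invr_ge0.
move: {2}#|F| (leqnn #|F|) => m; elim: m F po0 => [|m IH] F po0 F_le closed unfixed.
  have -> : F = set0 by apply/eqP; rewrite -cards_eq0 -leqn0.
  exact: subgaussian_sub1 (cmo_fiber_set0 po0) (V0 _).
have [->|/set0Pn [pw pwB]] := eqVneq (cmo_fiber F po0) set0; first exact: subgaussian_set0.
have [F0|/set0Pn [x xF]] := eqVneq F set0.
  by rewrite F0; apply: subgaussian_sub1 (cmo_fiber_set0 po0) (V0 _).
have card_F y : y \in F -> y != x -> #|F| = (#|F :\ x :\ y|).+2.
  by move=> yF yx; rewrite (cardsD1 x F) xF (cardsD1 y (F :\ x)) !inE yx yF.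
have partner_ok po : po \in cmo_fiber F po0 -> po.1 x \in F /\ po.1 x != x.
  by move=> poB; rewrite (cmo_fiber_partner closed) ?unfixed.
have [pwxF pwx] := partner_ok _ pwB; set N := #|F :\ x :\ pw.1 x|.
rewrite (card_F _ pwxF pwx) -/N.
(* Revealing the partner of [x] is a step of size [2/n], then its orientation one
   of size [1/n]: together [10/n^2] for the two half-edges [x] and [pw.1 x]. *)
have -> : N.+2%:R * (5 * n%:R^-1 ^+ 2) = N%:R * (5 * n%:R^-1 ^+ 2)
    + 2 * (1 * n%:R^-1) ^+ 2 + 2 * (2 * n%:R^-1) ^+ 2 :> R.
  by rewrite -addn2 natrD; ring.
apply: (subgaussian_partition (g := fun po : conf => po.1 x)) => [||y y'].
- by rewrite mulr_ge0 ?invr_ge0.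
- move=> y; have [->|/set0Pn [p1 /setIdP [p1B /eqP <-]]] :=
    eqVneq [set po in cmo_fiber F po0 | po.1 x == y] set0; first exact: subgaussian_set0.
  apply: partner_block_subgaussian (V0 _) _ => // po2 po2B po2x.
  have [yF yx] := partner_ok _ p1B; rewrite -po2x in yF yx *.
  have -> : N = #|F :\ x :\ po2.1 x| by apply/succn_inj/succn_inj; rewrite -!card_F.
  apply: IH => [||po].
  + by rewrite -ltnS -ltnS -card_F //; apply: leqW.
  + by move=> q; apply: (cmo_fiber_block_closed closed po2B xF).
  + by move=> po_in q; apply: (cmo_fiber_block_unfixed unfixed po2B xF po_in).
- exact: partner_blocks_dist.
Qed.

Lemma cmo_discarded_block (po1 : conf) : po1 \in C ->
  [set po in C | cmo_discarded po == cmo_discarded po1] = cmo_fiber (~: cmo_discarded po1) po1.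
Proof.
move=> po1C; have [_ card1 o1_ok] := cmo_spaceP _ po1C.
apply/setP => po; apply/setIdP/cmo_fiberP => [[poC /eqP disc]|[poC agree1 _]].
  have [_ _ o_ok] := cmo_spaceP _ poC.
  have fixed q : q \in cmo_discarded po1 -> po.1 q = q /\ po1.1 q = q.
    move=> q_disc; split; apply/eqP; last by move: q_disc; rewrite inE.
    by move: q_disc; rewrite -disc inE.
  split => // q; rewrite inE negbK => /fixed [pq p1q]; first by rewrite pq p1q.
  by have := o_ok q; have := o1_ok q; rewrite pq p1q eqxx => -> ->.
split => //; rewrite eq_sym eqEcard; have [_ -> _] := cmo_spaceP _ poC.
rewrite card1 leqnn andbT; apply/subsetP => q; rewrite !inE => /eqP p1q.
by rewrite agree1 ?inE ?negbK p1q.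
Qed.

Lemma discarded_blocks_dist (Z Z' : {set X}) :
  [set po in C | cmo_discarded po == Z] != set0 -> [set po in C | cmo_discarded po == Z'] != set0 ->
  `|unif_exp [set po in C | cmo_discarded po == Z] f
    - unif_exp [set po in C | cmo_discarded po == Z'] f| <= 1 * n%:R^-1.
Proof.
move=> /set0Pn [pa /setIdP [paC /eqP paZ]] /set0Pn [pb /setIdP [pbC /eqP pbZ]].
have [<-|ZZ'] := eqVneq Z Z'; first by rewrite subrr normr0 mulr_ge0 ?invr_ge0.
have [[_ cardZ _] [_ cardZ' _]] := (cmo_spaceP _ paC, cmo_spaceP _ pbC).
rewrite {}paZ {}pbZ in cardZ cardZ'.
case: (boolP (odd (\sum_k d k))) => [odd_sum|even_sum] in cardZ cardZ'; last first.
  by rewrite (cards0_eq cardZ) (cards0_eq cardZ') eqxx in ZZ'.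
have /cards1P [z Zz] : #|Z| == 1%N by rewrite cardZ.
have /cards1P [z' Zz'] : #|Z'| == 1%N by rewrite cardZ'.
have z'z : z' != z by apply: contraNneq ZZ' => z'z; rewrite Zz Zz' z'z.
have switch_block po u v : v != u -> po \in [set po in C | cmo_discarded po == [set u]] ->
    cmo_switch u v po \in [set po in C | cmo_discarded po == [set v]].
  move=> vu /setIdP [poC /eqP poZ]; rewrite inE cmo_switch_space //=.
  rewrite cmo_discarded_switch poZ; apply/eqP/setP => q.
  by rewrite !inE eq_tpermL tpermL.
rewrite {}Zz {}Zz' in ZZ' *.
apply: (unif_exp_dist_involution (phi := cmo_switch z z')).
- by rewrite mulr_ge0 ?invr_ge0.
- by move=> po; apply: switch_block.
- by move=> po; rewrite cmo_switchC; apply: switch_block; rewrite eq_sym.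
- exact: cmo_switchK.
- move=> po /setIdP [poC /eqP poZ]; apply: cmo_ratio_switch_discarded => //.
    by apply/eqP; move: (set11 z); rewrite -poZ inE.
  have : z' \notin cmo_discarded po by rewrite poZ in_set1.
  by rewrite inE.
Qed.

Lemma cmo_subgaussian :
  subgaussian C f (#|[set: X]|%:R * (5 * n%:R^-1 ^+ 2) + 2 * (1 * n%:R^-1) ^+ 2).
Proof.
apply: (subgaussian_partition (g := cmo_discarded)) => [||Z Z'].
- by rewrite mulr_ge0 ?invr_ge0.
- move=> Z; have [->|/set0Pn [p1 /setIdP [p1C /eqP <-]]] :=
    eqVneq [set po in C | cmo_discarded po == Z] set0; first exact: subgaussian_set0.
  rewrite cmo_discarded_block //.
  apply: subgaussian_mono (cmo_fiber_subgaussian _ _) _.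
  + by move=> q; rewrite !inE !negbK => /eqP p1q; rewrite !p1q.
  + move=> po; rewrite -cmo_discarded_block // => /setIdP [_ /eqP poZ] q.
    by rewrite -poZ !inE.
  + by rewrite ler_wpM2r ?mulr_ge0 ?exprn_ge0 ?invr_ge0 // ler_nat subset_leq_card ?subsetT.
- exact: discarded_blocks_dist.
Qed.

Lemma cmo_concentration (eps : R) : 0 < eps ->
  unif_prob R C (fun po => eps < `|f po - unif_exp C f|)
    <= 2 * expR (- (eps ^+ 2 * n%:R ^+ 2) / (32 * (\sum_k d k ^ 2)%N%:R)).
Proof.
move=> eps0; set S := (\sum_k d k ^ 2)%N.
have [S0|S_neq0] := eqVneq S 0%N.
  by rewrite S0 mulr0 invr0 mulr0 expR0 mulr1 (le_trans (unif_prob_le1 _ _ _)) ?ler1n.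
have n_pos : (0 : R) < n%:R by rewrite ltr0n.
have S_ge1 : (1 : R) <= S%:R by rewrite ler1n lt0n.
have S_pos : (0 : R) < S%:R by rewrite ltr0n lt0n.
have -> : - (eps ^+ 2 * n%:R ^+ 2) / (32 * S%:R) =
    - (eps ^+ 2 / (4 * (S%:R * (8 * n%:R^-1 ^+ 2)))).
  by field; rewrite !gt_eqF.
apply: subgaussian_tail => //; last by rewrite !mulr_gt0 ?exprn_gt0 ?invr_gt0.
apply: subgaussian_mono cmo_subgaussian _.
have card_le : (#|[set: X]|%:R : R) <= S%:R by rewrite ler_nat card_half_edges_le.
have inv_n2 : (0 : R) <= n%:R^-1 ^+ 2 by rewrite exprn_ge0 ?invr_ge0.
rewrite mul1r; nra.
Qed.

End ConfigurationModelOriented.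

Theorem theorem1p1 (R : realType) (n : nat) (dp dm : 'I_n -> nat) :
  (0 < n)%N ->
  ((\sum_k dm k = \sum_k dp k)%N ->
   forall eps : R, 0 < eps ->
     unif_prob R (dcm_space dp dm)
       (fun s => eps < `| @dcm_ratio R n dp dm s - unif_exp (dcm_space dp dm) (@dcm_ratio R n dp dm) |)
     <= 2 * expR (- (eps ^+ 2 * n%:R ^+ 2)
                  / (8 * (\sum_k (dp k + dm k) ^ 2)%N%:R)))
  /\
  (forall eps : R, 0 < eps ->
     let d := fun k => (dp k + dm k)%N in
     unif_prob R (cmo_space d)
       (fun po => eps < `| @cmo_ratio R n d po - unif_exp (cmo_space d) (@cmo_ratio R n d) |)
     <= 2 * expR (- (eps ^+ 2 * n%:R ^+ 2)
                  / (32 * (\sum_k (d k) ^ 2)%N%:R))).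
Proof.
move=> n_gt0; split => [_ eps eps0|eps eps0].
  exact: dcm_concentration.
exact: cmo_concentration.
Qed.
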